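(* Let $\ell,\tilde\ell\in\mathcal{D}^-[0,\infty)$ and $r,\tilde r\in\mathcal{D}^+[0,\infty)$ with $\tilde\ell\le\ell$, $r=\tilde r$ and $\inf_{t\ge0}(r(t)-\ell(t))>0$. Given $\psi\in\mathcal{D}[0,\infty)$, let $(\eta_\ell,\eta_r)$ and $(\eta_{\tilde\ell},\eta_{\tilde r})$ be the constraining processes associated with the SP for $\psi$ on $[\ell(\cdot),r(\cdot)]$ and on $[\tilde\ell(\cdot),\tilde r(\cdot)]$, respectively. Then for every $t\ge0$, $\eta_r(t)\ge\eta_{\tilde r}(t)$ and $\eta_\ell(t)\ge\eta_{\tilde\ell}(t)$.
   Context: $\mathcal{D}[0,\infty)$ denotes the càdlàg functions $[0,\infty)\to(-\infty,\infty)$; $\mathcal{D}^-[0,\infty)$ (resp. $\mathcal{D}^+[0,\infty)$) denotes càdlàg functions with values in $[-\infty,\infty)$ (resp. $(-\infty,\infty]$). SP: $(\phi,\eta)\in\mathcal{D}[0,\infty)^2$ solves the SP on $[\ell(\cdot),r(\cdot)]$ for $\psi$ if (1) $\phi(t)=\psi(t)+\eta(t)\in[\ell(t),r(t)]$ for all $t\ge0$; (2) $\eta=\eta_\ell-\eta_r$ with $\eta_\ell,\eta_r$ non-decreasing and $\int_0^\infty \mathbb{I}_{\{\phi(s)>\ell(s)\}}\,d\eta_\ell(s)=0$, $\int_0^\infty \mathbb{I}_{\{\phi(s)<r(s)\}}\,d\eta_r(s)=0$. The pair $(\eta_\ell,\eta_r)$ is called the pair of constraining processes associated with the SP. When $\inf_t(r(t)-\ell(t))>0$,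 the SP has a unique solution for every $\psi\in\mathcal{D}[0,\infty)$. *)

From HB Require Import structures.
From mathcomp Require Import all_boot all_order all_algebra.
From mathcomp Require Import all_classical all_reals all_analysis.
Set Implicit Arguments. Unset Strict Implicit. Unset Printing Implicit Defensive.
Import Order.TTheory GRing.Theory Num.Theory.
Import numFieldNormedType.Exports.
Local Open Scope classical_set_scope.
Local Open Scope ring_scope.

(* Càdlàg on [0,oo): right-continuous at every t >= 0, left limit (in T)
   exists at every t > 0. Values at t < 0 are irrelevant. *)
Definition cadlag (R : realType) (T : topologicalType) (f : R -> T) : Prop :=
  forall t : R, 0 <= t ->
    (f @ at_right t --> f t) /\ (0 < t -> exists L : T, f @ at_left t --> L).

Definition D0 (R : realType) (f : R -> R) : Prop := cadlag f.

Definition Dminus (R : realType) (f : R -> \bar R) : Prop :=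
  cadlag f /\ (forall t, 0 <= t -> f t != +oo%E)
  /\ (forall t, 0 < t -> lim (f @ at_left t) != +oo%E).

Definition Dplus (R : realType) (f : R -> \bar R) : Prop :=
  cadlag f /\ (forall t, 0 <= t -> f t != -oo%E)
  /\ (forall t, 0 < t -> lim (f @ at_left t) != -oo%E).

Definition nondecr0 (R : realType) (f : R -> R) : Prop :=
  forall s t : R, 0 <= s -> s <= t -> f s <= f t.

(* int_{[0,oo)} 1_A(s) d eta(s) = 0, where d eta is the Lebesgue-Stieltjes
   measure of the nondecreasing right-continuous eta on [0,oo), with the
   convention eta(0-) = 0 (so d eta has an atom of size eta(0) at 0). *)
Definition stieltjes_zero (R : realType) (eta : R -> R) (A : set R) : Prop :=
  exists mu : {measure set R -> \bar R},
    (forall t : R, 0 <= t -> mu [set` `]-oo, t]] = (eta t)%:E) /\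
    mu [set` `]-oo, 0[] = 0%E /\
    (\int[mu]_(s in [set` (`[0%R, +oo[ : interval R)]) (\1_A s)%:E = 0)%E.

Definition SP (R : realType) (l r : R -> \bar R) (psi phi eta etal etar : R -> R)
  : Prop :=
  D0 phi /\ D0 eta /\
  (forall t, 0 <= t -> phi t = psi t + eta t) /\
  (forall t, 0 <= t -> (l t <= (phi t)%:E)%E /\ ((phi t)%:E <= r t)%E) /\
  (forall t, 0 <= t -> eta t = etal t - etar t) /\
  nondecr0 etal /\ nondecr0 etar /\
  stieltjes_zero etal [set s | (l s < (phi s)%:E)%E] /\
  stieltjes_zero etar [set s | ((phi s)%:E < r s)%E].

From HB Require Import structures.
From mathcomp Require Import all_boot all_order all_algebra.
From mathcomp Require Import all_classical all_reals all_analysis.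
From mathcomp Require Import lra.
Import Order.TTheory GRing.Theory Num.Theory.
Import numFieldNormedType.Exports.
Local Open Scope classical_set_scope.
Local Open Scope ring_scope.

(* Put [Dl = etal - etalt] and [Dr = etar - etart], so that
   [phi - phit = Dl - Dr].  The process [etalt] only increases where
   [phit <= lt <= l <= phi], i.e. where [Dr <= Dl]; symmetrically [etart] only
   increases where [phi <= r = rt <= phit], i.e. where [Dl <= Dr].  Where
   [etalt] is flat, [Dl] is nondecreasing, and right after any time one of
   [etalt], [etart] is flat, because [phit] and [r] are right-continuous and
   the barriers stay [d] apart.  A continuous induction on time then
   propagates [Dl, Dr >= 0] from time [0]. *)

Definition increases_off {R : realType} (f : R -> R) (A : set R) :=
  forall s t, 0 <= s -> s < t -> f s < f t -> exists2 z, s < z <= t & ~ A z.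

(* Left continuity at the points of [A] of [f] extended by [0] to negative
   times; at [z = 0] this says [f 0 <= 0]. *)
Definition left_continuous_on {R : realType} (f : R -> R) (A : set R) :=
  forall z e, 0 <= z -> A z -> 0 < e ->
    f z <= e \/ exists2 w, 0 <= w < z & f z <= f w + e.

Lemma real_induction {R : realType} (P : R -> Prop) :
  (forall s, 0 <= s -> (forall z, 0 <= z < s -> P z) -> P s) ->
  (forall s, 0 <= s -> (forall z, 0 <= z <= s -> P z) ->
     exists2 dl, 0 < dl & forall z, s < z < s + dl -> P z) ->
  forall t, 0 <= t -> P t.
Proof.
move=> at_s right_of_s t t0.
pose G := [set y | 0 <= y <= t /\ forall z, 0 <= z <= y -> P z].
have P0 : P 0 by apply: at_s => // z; rewrite le_lt_asym.
have G0 : G 0.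
  split=> [|z /andP[z0 z0']]; first by rewrite lexx t0.
  by rewrite (@le_anti _ _ z 0) ?z0 ?z0'.
have Gt : ubound G t by move=> y [/andP[]].
have Gub : has_ubound G by exists t.
set s := sup G.
have s0 : 0 <= s by exact: ub_le_sup.
have st : s <= t by apply: ge_sup => //; exists 0.
have before_s : forall z, 0 <= z < s -> P z.
  move=> z /andP[z0 zs]; have [y [_ Py] zy] := sup_gt (ex_intro _ 0 G0) zs.
  by apply: Py; rewrite z0 ltW.
have upto_s : forall z, 0 <= z <= s -> P z.
  move=> z /andP[z0]; rewrite le_eqVlt => /predU1P[->|zs].
    exact: at_s.
  by apply: before_s; rewrite z0.
have [<-|ts] := eqVneq s t; first by apply: upto_s; rewrite s0 lexx.
have {ts}lt_st : s < t by rewrite lt_neqAle ts st.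
have [dl dl0 Pdl] := right_of_s s s0 upto_s.
pose y := Num.min (s + dl / 2) t.
have sy : s < y by rewrite lt_min lt_st ltrDl divr_gt0.
have yd : y <= s + dl / 2 by rewrite ge_min lexx.
suff /(ub_le_sup Gub) ys : G y by have := lt_le_trans sy ys; rewrite ltxx.
split=> [|z /andP[z0 zy]]; first by rewrite ge_min lexx orbT andbT; lra.
have [zs|sz] := leP z s; first by apply: upto_s; rewrite z0.
by apply: Pdl; rewrite sz /=; lra.
Qed.

Lemma near_right_itv {R : realType} (s : R) (P : R -> Prop) :
  (\forall z \near at_right s, P z) ->
  exists2 dl, 0 < dl & forall z, s < z < s + dl -> P z.
Proof.
move=> [e /= e0 sP]; exists e => // z /andP[sz zd]; apply: sP => //=.
by rewrite /ball /= ltr_norml; apply/andP; split; lra.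
Qed.

Section one_constraint.
Context {R : realType} {u v : R -> R} {A : set R}.
Hypotheses (u_nd : nondecr0 u) (v_nd : nondecr0 v) (u0 : 0 <= u 0).
Hypotheses (v_inc : increases_off v A) (v_left : left_continuous_on v A).

Lemma subr_le_flat (s t : R) : 0 <= s -> s <= t ->
  (forall z, s < z <= t -> A z) -> u s - v s <= u t - v t.
Proof.
move=> s0 st flat; have [<-//|ts] := eqVneq s t.
have lt_st : s < t by rewrite lt_neqAle ts st.
have vts : v t <= v s.
  by rewrite leNgt; apply/negP => /(v_inc _ _ s0 lt_st) [z /flat Az]; apply.
by have := u_nd _ _ s0 st; lra.
Qed.

Lemma subr_ge0_flat (s dl : R) : 0 <= s -> 0 <= u s - v s ->
  (forall z, s < z < s + dl -> A z) ->
  forall z, s <= z < s + dl -> 0 <= u z - v z.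
Proof.
move=> s0 ds flat z /andP[sz zd].
apply: le_trans ds (subr_le_flat _ _ s0 sz _) => y /andP[sy yz].
by apply: flat; rewrite sy /=; lra.
Qed.

Lemma subr_ge0_left (s : R) : 0 <= s -> A s ->
  (forall w, 0 <= w < s -> exists2 z, w <= z <= s & 0 <= u z - v z) ->
  0 <= u s - v s.
Proof.
move=> s0 As cluster; apply/ler_addgt0Pr => e e0.
case: (v_left _ _ s0 As e0) => [vs|[w /andP[w0 ws] vw]].
  by have := u_nd _ _ (lexx _) s0; move: u0; lra.
have [z /andP[wz zs] dz] := cluster w ltac:(by rewrite w0 ws).
by have := v_nd _ _ w0 wz; have := u_nd _ _ (le_trans w0 wz) zs; lra.
Qed.

Lemma subr_ge0_propagate (g : R -> R) (x y : R) : 0 <= x -> 0 <= u x - v x ->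
  (forall z, x <= z < y -> 0 <= g z) ->
  (forall z, 0 <= z -> ~ A z -> g z <= u z - v z) ->
  forall w, x <= w < y -> 0 <= u w - v w.
Proof.
move=> x0 dx g0 g_le w /andP[xw wy].
pose S := [set z | x <= z <= w /\ (z = x \/ ~ A z)].
have Sx : S x by split; [rewrite lexx xw|left].
have Sw : ubound S w by move=> z [/andP[]].
have Sub : has_ubound S by exists w.
set c := sup S.
have xc : x <= c by exact: ub_le_sup.
have cw : c <= w by apply: ge_sup => //; exists x.
have offA : forall z, x <= z <= w -> ~ A z -> 0 <= u z - v z.
  move=> z /andP[xz zw] nAz; apply: le_trans (g_le z _ nAz); last lra.
  by apply: g0; rewrite xz /=; lra.
have S_ge0 : forall z, S z -> 0 <= u z - v z.
  by move=> z [xzw [->|]] //; exact: offA.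
have dc : 0 <= u c - v c.
  have [Ac|nAc] := pselect (A c); last by apply: (offA _ _ nAc); rewrite xc cw.
  apply: (subr_ge0_left c (le_trans x0 xc) Ac) => w' /andP[_ w'c].
  have [z Sz w'z] := sup_gt (ex_intro _ x Sx) w'c.
  by exists z; [rewrite (ltW w'z) (ub_le_sup Sub Sz)|exact: S_ge0].
apply: le_trans dc (subr_le_flat _ _ _ cw _); first lra.
move=> z /andP[cz zw]; apply: contrapT => nAz.
have : z <= c by apply: (ub_le_sup Sub); split; [rewrite zw; lra|right].
lra.
Qed.

End one_constraint.

Section two_constraints.
Context {R : realType} {ul vl ur vr : R -> R} {Al Ar : set R}.
Hypotheses (ul_nd : nondecr0 ul) (vl_nd : nondecr0 vl).
Hypotheses (ur_nd : nondecr0 ur) (vr_nd : nondecr0 vr).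
Hypotheses (ul0 : 0 <= ul 0) (ur0 : 0 <= ur 0).
Hypotheses (vl_inc : increases_off vl Al) (vl_left : left_continuous_on vl Al).
Hypotheses (vr_inc : increases_off vr Ar) (vr_left : left_continuous_on vr Ar).
Hypothesis off_Al : forall z, 0 <= z -> ~ Al z -> ur z - vr z <= ul z - vl z.
Hypothesis off_Ar : forall z, 0 <= z -> ~ Ar z -> ul z - vl z <= ur z - vr z.
Hypothesis Al_or_Ar : forall z, 0 <= z -> Al z \/ Ar z.
Hypothesis near_Al_or_Ar : forall s, 0 <= s ->
  (\forall z \near at_right s, Al z) \/ (\forall z \near at_right s, Ar z).

Let good z := 0 <= ul z - vl z /\ 0 <= ur z - vr z.

Let good_at s : 0 <= s -> (forall z, 0 <= z < s -> good z) -> good s.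
Proof.
move=> s0 before.
have good_l : Al s -> 0 <= ul s - vl s.
  move=> /(subr_ge0_left ul_nd vl_nd ul0 vl_left _ s0); apply=> w ws.
  by exists w; [rewrite lexx ltW //; case/andP: ws|case: (before w ws)].
have good_r : Ar s -> 0 <= ur s - vr s.
  move=> /(subr_ge0_left ur_nd vr_nd ur0 vr_left _ s0); apply=> w ws.
  by exists w; [rewrite lexx ltW //; case/andP: ws|case: (before w ws)].
have [Als|nAls] := pselect (Al s); have [Ars|nArs] := pselect (Ar s).
- by split; [exact: good_l|exact: good_r].
- by have := good_l Als; have := off_Ar _ s0 nArs; split; lra.
- by have := good_r Ars; have := off_Al _ s0 nAls; split; lra.
- by case: (Al_or_Ar _ s0).
Qed.

Let good_right s : 0 <= s -> (forall z, 0 <= z <= s -> good z) ->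
  exists2 dl, 0 < dl & forall z, s < z < s + dl -> good z.
Proof.
move=> s0 upto; have [gl gr] : good s by apply: upto; rewrite s0 lexx.
case: (near_Al_or_Ar _ s0) => /near_right_itv[dl dl0 flat]; exists dl => // z.
all: move=> /andP[/ltW sz zd]; have zs : s <= z < s + dl by rewrite sz zd.
- have gl_dl := subr_ge0_flat ul_nd vl_inc _ _ s0 gl flat.
  split; first exact: gl_dl.
  exact: (subr_ge0_propagate ur_nd vr_nd ur0 vr_inc vr_left
    _ _ _ s0 gr gl_dl off_Ar _ zs).
- have gr_dl := subr_ge0_flat ur_nd vr_inc _ _ s0 gr flat.
  split; last exact: gr_dl.
  exact: (subr_ge0_propagate ul_nd vl_nd ul0 vl_inc vl_left
    _ _ _ s0 gl gr_dl off_Al _ zs).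
Qed.

Lemma subr_ge0_two_constraints t : 0 <= t ->
  0 <= ul t - vl t /\ 0 <= ur t - vr t.
Proof. exact: real_induction good_at good_right t. Qed.

End two_constraints.

Lemma cadlag_near_right_gap {R : realType} {lo hi : R -> \bar R} {f : R -> R}
    {d : R} :
  0 < d -> cadlag f -> cadlag hi -> (forall t, 0 <= t -> hi t != -oo%E) ->
  (forall t, 0 <= t -> (lo t + d%:E <= hi t)%E) ->
  forall s, 0 <= s ->
    (\forall z \near at_right s, (lo z < (f z)%:E)%E) \/
    (\forall z \near at_right s, ((f z)%:E < hi z)%E).
Proof.
move=> d0 f_cadlag hi_cadlag hiNy lo_hi s s0.
have [f_cvg _] := f_cadlag s s0; have [hi_cvg _] := hi_cadlag s s0.
have d4 : 0 < d / 4 by rewrite divr_gt0.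
have near_f := cvgr_dist_lt _ _ f_cvg _ d4.
case hs: (hi s) => [x| |]; last by have := hiNy s s0; rewrite hs.
- move: hi_cvg; rewrite hs => /fine_cvgP[hi_fin hi_x].
  have near_hi := cvgr_dist_lt _ _ hi_x _ d4.
  have [fs_lt|fs_ge] := ltP (f s) (x - d / 2); [right|left]; near=> z;
    have /fineK hiE : hi z \is a fin_num by near: z; exact: hi_fin.
  + have : `|f s - f z| < d / 4 by near: z; exact: near_f.
    have : `|x - fine (hi z)| < d / 4 by near: z; exact: near_hi.
    rewrite -hiE lte_fin !ltr_norml => /andP[? ?] /andP[? ?]; lra.
  + have z0 : 0 <= z by apply/ltW/(le_lt_trans s0); near: z; exact: nbhs_right_gt.
    rewrite -(@lteD2rE _ d%:E) //; apply: le_lt_trans (lo_hi z z0) _.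
    have : `|f s - f z| < d / 4 by near: z; exact: near_f.
    have : `|x - fine (hi z)| < d / 4 by near: z; exact: near_hi.
    rewrite -hiE -EFinD lte_fin !ltr_norml => /andP[? ?] /andP[? ?]; lra.
- move: hi_cvg; rewrite hs => /cvgeyPgt /(_ (f s + d)) near_hi.
  right; near=> z; apply: le_lt_trans (_ : (f s + d)%:E < hi z)%E; last by near: z.
  have : `|f s - f z| < d / 4 by near: z; exact: near_f.
  rewrite lee_fin ltr_norml => /andP[? ?]; lra.
Unshelve. all: by end_near.
Qed.

(* [A] need not be measurable, hence the comparison through simple functions. *)
Lemma integral_indic_eq0_null {d} {T : measurableType d} {R : realType}
    {mu : {measure set T -> \bar R}} {D A B : set T} :
  (\int[mu]_(x in D) (\1_A x)%:E = 0)%E -> measurable B -> B `<=` D `&` A ->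
  mu B = 0%E.
Proof.
move=> A_null mB BDA; apply/eqP; rewrite eq_le measure_ge0 andbT -A_null.
rewrite ge0_integralE; last by move=> x _; rewrite lee_fin.
apply: ereal_sup_ubound => /=; exists (indic_nnsfun R mB); last first.
  by rewrite sintegral_indic.
move=> x /=; rewrite /patch measurable_realfun.mindicE /indic.
have [Bx|nBx] := pselect (B x).
  by have [Dx Ax] := BDA x Bx; rewrite !mem_set.
by rewrite memNset //=; case: ifP => // _; rewrite lee_fin; case: (x \in A).
Qed.

Lemma measure_itvNyo_sup (R : realType) (mu : {measure set R -> \bar R})
    (z : R) (x : \bar R) :
  (x < mu [set` `]-oo, z[])%E ->
  exists2 w, w < z & (x <= mu [set` `]-oo, w]])%E.
Proof.
pose F n := [set` `]-oo, z - n.+1%:R^-1]].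
have mF n : measurable (F n) by exact: measurable_itv.
have F_nd : nondecreasing_seq F.
  move=> n m nm; apply/subsetPset => y; rewrite /F /= !in_itv /= => /le_trans; apply.
  by rewrite lerB // lef_pV2 ?posrE ?ltr0n // ler_nat ltnS.
have F_cup : \bigcup_n F n = [set` `]-oo, z[].
  apply/seteqP; split => y /=.
    move=> [n _]; rewrite /F /= !in_itv /= => /le_lt_trans; apply.
    by rewrite ltrBlDr ltrDl.
  rewrite in_itv /= => yz; exists (Num.truncn (z - y)^-1) => //.
  rewrite /F /= in_itv /= lerBrDr -lerBrDl -[leRHS]invrK.
  rewrite lef_pV2 ?posrE ?invr_gt0 ?subr_gt0 //.
  exact/ltW/truncnS_gt.
have muF_nd : nondecreasing_seq (mu \o F).
  by move=> n m nm; apply: le_measure; rewrite ?inE //; apply/subsetPset/F_nd.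
have muF_cvg : (mu \o F) n @[n --> \oo] --> mu [set` `]-oo, z[].
  by rewrite -F_cup; apply: nondecreasing_cvg_mu => //; exact: bigcupT_measurable.
case: x => [x| |] x_lt.
- rewrite -(cvg_lim _ muF_cvg) // in x_lt.
  have [N _ xN] := lte_lim muF_nd (cvgP _ muF_cvg) x_lt.
  by exists (z - N.+1%:R^-1); [rewrite ltrBlDr ltrDl|exact: (xN N (leqnn N))].
- by move: (lt_le_trans x_lt (leey _)); rewrite ltxx.
- by exists (z - 1); [rewrite ltrBlDr ltrDl|rewrite leNye].
Qed.

Section stieltjes_zero.
Context {R : realType} {eta : R -> R} {A : set R}.
Hypothesis eta_A : stieltjes_zero eta A.

Lemma stieltjes_zero_ge0 : 0 <= eta 0.
Proof. by case: eta_A => mu [mu_eta _]; rewrite -lee_fin -mu_eta. Qed.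

Lemma stieltjes_zero_increases_off : increases_off eta A.
Proof.
case: eta_A => mu [mu_eta [_ A_null]] s t s0 st est; apply: contrapT => noz.
have flat : mu [set` `]s, t]] = 0%E.
  apply: (integral_indic_eq0_null A_null) => // z /=.
  rewrite !in_itv /= andbT => /andP[sz zt]; split; first exact: le_trans (ltW sz).
  by apply: contrapT => nAz; apply: noz; exists z; rewrite ?sz.
have : (mu [set` `]-oo, t]] <= mu [set` `]-oo, s]] + mu [set` `]s, t]])%E.
  rewrite (@itv_bndbnd_setU _ _ _ (BRight s)) ?bnd_simp ?(ltW st) //.
  by apply: measureU2; exact: measurable_itv.
rewrite flat adde0 !mu_eta ?lee_fin //; [lra|exact: le_trans (ltW st)].
Qed.

Lemma stieltjes_zero_left_continuous : left_continuous_on eta A.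
Proof.
case: eta_A => mu [mu_eta [mu_neg A_null]] z e z0 Az e0.
have atom : mu [set z] = 0%E.
  by apply: (integral_indic_eq0_null A_null) => // _ ->; rewrite /= in_itv /= z0.
have eta_le : ((eta z)%:E <= mu [set` `]-oo, z[])%E.
  rewrite -mu_eta // -(@setUitv1 _ _ _ _ true) ?bnd_simp //.
  have : (mu ([set` `]-oo, z[] `|` [set z]) <= mu [set` `]-oo, z[] + mu [set z])%E.
    by apply: measureU2; [exact: measurable_itv|exact: measurable_set1].
  by rewrite atom adde0.
have [w wz eta_w] : exists2 w, w < z & ((eta z - e)%:E <= mu [set` `]-oo, w]])%E.
  by apply: measure_itvNyo_sup; apply: lt_le_trans eta_le; rewrite lte_fin; lra.
have [w0|w0] := leP 0 w.
  by right; exists w; [rewrite w0 wz|move: eta_w; rewrite mu_eta // lee_fin; lra].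
left; have : (mu [set` `]-oo, w]] <= mu [set` `]-oo, 0%R[])%E.
  apply: le_measure; rewrite ?inE; [exact: measurable_itv..|] => y /=.
  by rewrite !in_itv /= => /le_lt_trans; apply.
by rewrite mu_neg => /(le_trans eta_w); rewrite lee_fin; lra.
Qed.

End stieltjes_zero.

Lemma SP_sub {R : realType} {l r l' r' : R -> \bar R} {psi : R -> R}
    {phi eta etal etar phi' eta' etal' etar' : R -> R} :
  SP l r psi phi eta etal etar -> SP l' r' psi phi' eta' etal' etar' ->
  forall t, 0 <= t -> phi t - phi' t = (etal t - etal' t) - (etar t - etar' t).
Proof.
move=> [_ [_ [phiE [_ [etaE _]]]]] [_ [_ [phiE' [_ [etaE' _]]]]] t t0.
by rewrite phiE // phiE' // etaE // etaE' //; lra.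
Qed.

Theorem corollary3p2 (R : realType) (l lt : R -> \bar R) (r rt : R -> \bar R)
  (psi : R -> R) :
  Dminus l -> Dminus lt -> Dplus r -> Dplus rt ->
  (forall t, 0 <= t -> (lt t <= l t)%E) ->
  r = rt ->
  (exists2 d : R, 0 < d & forall t, 0 <= t -> (l t + d%:E <= r t)%E) ->
  D0 psi ->
  forall (phi eta etal etar phit etat etalt etart : R -> R),
    SP l r psi phi eta etal etar ->
    SP lt rt psi phit etat etalt etart ->
    forall t, 0 <= t -> etart t <= etar t /\ etalt t <= etal t.
Proof.
move=> _ _ [r_cadlag [rNy _]] _ lt_l <- [d d0 l_r] _ phi eta etal etar
  phit etat etalt etart SPl SPt t t0.
have sub := SP_sub SPl SPt.
case: SPl => _ [_ [_ [bnd [_ [ndl [ndr [szl szr]]]]]]].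
case: SPt => phit_cadlag [_ [_ [_ [_ [ndlt [ndrt [szlt szrt]]]]]]].
have lt_r z : 0 <= z -> (lt z + d%:E <= r z)%E.
  by move=> z0; apply: le_trans (l_r z z0); rewrite leeD2r ?lt_l.
suff [] : 0 <= etal t - etalt t /\ 0 <= etar t - etart t by split; lra.
apply: (subr_ge0_two_constraints ndl ndlt ndr ndrt
  (stieltjes_zero_ge0 szl) (stieltjes_zero_ge0 szr)
  (stieltjes_zero_increases_off szlt) (stieltjes_zero_left_continuous szlt)
  (stieltjes_zero_increases_off szrt) (stieltjes_zero_left_continuous szrt))
  => // z z0 /=.
- move=> /negP; rewrite -leNgt => phit_lt; have [l_phi _] := bnd z z0.
  have := le_trans phit_lt (le_trans (lt_l z z0) l_phi).
  by rewrite lee_fin; have := sub z z0; lra.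
- move=> /negP; rewrite -leNgt => r_phit; have [_ phi_r] := bnd z z0.
  by have := le_trans phi_r r_phit; rewrite lee_fin; have := sub z z0; lra.
- apply/orP; rewrite !ltNge -negb_and; apply/negP => /andP[phit_lt r_phit].
  have := le_trans (leeD2r d%:E phit_lt) (le_trans (lt_r z z0) r_phit).
  by rewrite -EFinD lee_fin; lra.
- exact: (cadlag_near_right_gap d0 phit_cadlag r_cadlag rNy lt_r _ z0).
Qed.
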